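(* If two gyrochords $A_1A_2$ and $B_1B_2$ of a gyrocircle in the Einstein gyrovector space $\mathbb{R}^n_s$ intersect at a point $P$, then $$\frac{\gamma_{|PA_1|}|PA_1|\,\gamma_{|PA_2|}|PA_2|}{\gamma_{|A_1A_2|}+1}=\frac{\gamma_{|PB_1|}|PB_1|\,\gamma_{|PB_2|}|PB_2|}{\gamma_{|B_1B_2|}+1},$$ where $|XY|=\|\ominus X\oplus Y\|$ denotes gyrodistance and $\gamma_a=(1-a^2/s^2)^{-1/2}$.
   Context: Fix $s>0$, $n\ge2$; $\mathbb{R}^n_s=\{v\in\mathbb{R}^n:\|v\|<s\}$ with Einstein addition $u\oplus v=\frac{1}{1+u\cdot v/s^2}\{u+\frac{1}{\gamma_u}v+\frac{1}{s^2}\frac{\gamma_u}{1+\gamma_u}(u\cdot v)u\}$, $\gamma_v=(1-\|v\|^2/s^2)^{-1/2}$, $\ominus v=-v$. Gyrosegments are Euclidean segments with endpoints in the ball. A gyroplane is $(A_1\oplus\mathrm{span}\{\ominus A_1\oplus A_2,\ominus A_1\oplus A_3\})\cap\mathbb{R}^n_s$ for $\ominus A_1\oplus A_2,\ominus A_1\oplus A_3$ linearly independent; a gyrocircle with gyrocenter $O$ and gyroradius $r>0$ is the set of points of a gyroplane containing $O$ at gyrodistance $r$ from $O$. A gyrochord is a gyrosegment whose two endpoints lie on the gyrocircle. *)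

From mathcomp Require Import all_boot all_order all_algebra.
From mathcomp Require Import reals.
Set Implicit Arguments. Unset Strict Implicit. Unset Printing Implicit Defensive.
Import Order.TTheory GRing.Theory Num.Theory.
Local Open Scope ring_scope.

Section Einstein.
Variables (R : realType) (n : nat).

Definition dotv (u v : 'rV[R]_n) : R := \sum_(i < n) u 0 i * v 0 i.
Definition normv (v : 'rV[R]_n) : R := Num.sqrt (dotv v v).

Definition gammaR (s a : R) : R := (Num.sqrt (1 - a ^+ 2 / s ^+ 2))^-1.
Definition gammaV (s : R) (v : 'rV[R]_n) : R := gammaR s (normv v).

Definition eadd (s : R) (u v : 'rV[R]_n) : 'rV[R]_n :=
  (1 + dotv u v / s ^+ 2)^-1 *:
    (u + (gammaV s u)^-1 *: v
       + (s ^+ 2)^-1 * (gammaV s u / (1 + gammaV s u)) * dotv u v *: u).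

Definition eopp (v : 'rV[R]_n) : 'rV[R]_n := - v.

Definition in_ball (s : R) (v : 'rV[R]_n) : Prop := normv v < s.

Definition gyrodist (s : R) (X Y : 'rV[R]_n) : R := normv (eadd s (eopp X) Y).

Definition lin_indep2 (u v : 'rV[R]_n) : Prop :=
  forall a b : R, a *: u + b *: v = 0 -> a = 0 /\ b = 0.

Definition is_gyroplane_data (s : R) (A1 A2 A3 : 'rV[R]_n) : Prop :=
  [/\ in_ball s A1, in_ball s A2, in_ball s A3 &
      lin_indep2 (eadd s (eopp A1) A2) (eadd s (eopp A1) A3)].

Definition in_gyroplane (s : R) (A1 A2 A3 X : 'rV[R]_n) : Prop :=
  in_ball s X /\
  exists a b : R,
    X = eadd s A1 (a *: eadd s (eopp A1) A2 + b *: eadd s (eopp A1) A3).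

Definition on_gyrocircle (s : R) (A1 A2 A3 O : 'rV[R]_n) (r : R)
  (X : 'rV[R]_n) : Prop :=
  in_gyroplane s A1 A2 A3 X /\ gyrodist s O X = r.

(* gyrosegment = Euclidean segment *)
Definition on_segment (X Y P : 'rV[R]_n) : Prop :=
  exists t : R, 0 <= t <= 1 /\ P = (1 - t) *: X + t *: Y.

End Einstein.

From mathcomp Require Import all_boot all_order all_algebra.
From mathcomp Require Import reals.
From mathcomp Require Import ring lra.
Set Implicit Arguments. Unset Strict Implicit. Unset Printing Implicit Defensive.
Import Order.TTheory GRing.Theory Num.Theory.
Local Open Scope ring_scope.

(* Lift u in the ball to the hyperboloid point (gamma_u, gamma_u u / s).  The
   Minkowski product of two lifts is gamma of their gyrodistance, and the lift
   of a point P of the Euclidean segment A1A2 is a nonnegative combination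
   l (lift A1) + m (lift A2).  For O on the gyrocircle this gives
   gamma_|OP| = (l + m) gamma_r, while gamma_|PA1|, gamma_|PA2|, gamma_|A1A2|
   and the normalization l^2 + m^2 + 2 l m gamma_|A1A2| = 1 turn both sides of
   the theorem into s^2 (1 - (gamma_|OP| / gamma_r)^2) / 2, which depends on P
   and the circle only. *)

Lemma chord_product_alg (R : realFieldType) (s l m G f1 f2 : R) :
  0 <= l -> 0 <= m -> 0 < G -> 1 <= G ^+ 2 ->
  l ^+ 2 + m ^+ 2 + 2 * l * m * G = 1 ->
  0 <= f1 -> 0 <= f2 ->
  f1 ^+ 2 = s ^+ 2 * ((l + m * G) ^+ 2 - 1) ->
  f2 ^+ 2 = s ^+ 2 * ((l * G + m) ^+ 2 - 1) ->
  f1 * f2 / (G + 1) = s ^+ 2 * (1 - (l + m) ^+ 2) / 2.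
Proof.
move=> l0 m0 G0 G1 norm1 f1_0 f2_0 f1E f2E.
have f1f2E : f1 * f2 = s ^+ 2 * (l * m * (G ^+ 2 - 1)).
  have lmG_ge0 : 0 <= l * m * (G ^+ 2 - 1) by rewrite !mulr_ge0 // subr_ge0.
  apply/eqP; rewrite -(eqrXn2 (n := 2) _ (mulr_ge0 f1_0 f2_0)
    (mulr_ge0 (sqr_ge0 s) lmG_ge0)) //.
  rewrite exprMn f1E f2E; apply/eqP.
  have -> : (l + m * G) ^+ 2 - 1 = m ^+ 2 * (G ^+ 2 - 1) by lra.
  have -> : (l * G + m) ^+ 2 - 1 = l ^+ 2 * (G ^+ 2 - 1) by lra.
  ring.
have G1_neq0 : G + 1 != 0 by rewrite gt_eqF // addr_gt0.
have sum_sqr : 1 - (l + m) ^+ 2 = 2 * l * m * (G - 1) by lra.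
by rewrite f1f2E sum_sqr; field.
Qed.

Section DotProduct.
Variables (R : realType) (n : nat).
Implicit Types (u v w : 'rV[R]_n) (a : R).

Lemma dotvC u v : dotv u v = dotv v u.
Proof. by apply: eq_bigr => i _; rewrite mulrC. Qed.

Lemma dotvDl u v w : dotv (u + v) w = dotv u w + dotv v w.
Proof.
by rewrite /dotv -big_split; apply: eq_bigr => i _; rewrite !mxE mulrDl.
Qed.

Lemma dotvZl a u w : dotv (a *: u) w = a * dotv u w.
Proof.
by rewrite /dotv mulr_sumr; apply: eq_bigr => i _; rewrite !mxE mulrA.
Qed.

Lemma dotvNl u w : dotv (- u) w = - dotv u w.
Proof. by rewrite -scaleN1r dotvZl mulN1r. Qed.

Lemma dotvDr u v w : dotv w (u + v) = dotv w u + dotv w v.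
Proof. by rewrite dotvC dotvDl !(dotvC w). Qed.

Lemma dotvZr a u w : dotv w (a *: u) = a * dotv w u.
Proof. by rewrite dotvC dotvZl dotvC. Qed.

Lemma dotvNr u w : dotv w (- u) = - dotv w u.
Proof. by rewrite dotvC dotvNl dotvC. Qed.

Lemma dotv_ge0 u : 0 <= dotv u u.
Proof. by apply: sumr_ge0 => i _; rewrite -expr2 sqr_ge0. Qed.

Lemma normv_ge0 u : 0 <= normv u.
Proof. exact: sqrtr_ge0. Qed.

Lemma normv_sqr u : normv u ^+ 2 = dotv u u.
Proof. by rewrite /normv sqr_sqrtr // dotv_ge0. Qed.

Lemma dotv_lt_sqr a u v : dotv u u < a -> dotv v v < a -> dotv u v < a.
Proof.
move=> ua va; have := dotv_ge0 (u - v).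
by rewrite !(dotvDl, dotvDr, dotvNl, dotvNr) (dotvC v u); lra.
Qed.

End DotProduct.

Section Gamma.
Variables (R : realType) (n : nat) (s : R).
Hypothesis s_gt0 : 0 < s.
Implicit Types (u v Z A B : 'rV[R]_n) (t : R).

Let s2_gt0 : 0 < s ^+ 2. Proof. exact: exprn_gt0. Qed.

Let s_neq0 : s != 0. Proof. exact: lt0r_neq0. Qed.

Let one_sub_gt0 x : x < s ^+ 2 -> 0 < 1 - x / s ^+ 2.
Proof. by move=> xs; rewrite subr_gt0 ltr_pdivrMr // mul1r. Qed.

Lemma in_ball_dotv u : in_ball s u -> dotv u u < s ^+ 2.
Proof. rewrite /in_ball -normv_sqr => us; have := normv_ge0 u; nra. Qed.

Lemma gammaV_gt0 u : dotv u u < s ^+ 2 -> 0 < gammaV s u.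
Proof. by move=> us; rewrite invr_gt0 sqrtr_gt0 normv_sqr one_sub_gt0. Qed.

Lemma gammaV_sqr u :
  dotv u u < s ^+ 2 -> gammaV s u ^+ 2 * (1 - dotv u u / s ^+ 2) = 1.
Proof.
move=> us; have x_gt0 := one_sub_gt0 us.
rewrite /gammaV /gammaR normv_sqr exprVn sqr_sqrtr ?ltW // mulVf //.
exact: lt0r_neq0.
Qed.

Lemma dotv_gammaV u :
  dotv u u < s ^+ 2 -> dotv u u = s ^+ 2 * (1 - gammaV s u ^-2).
Proof.
move=> us; have g_neq0 := lt0r_neq0 (gammaV_gt0 us).
have <- : 1 - dotv u u / s ^+ 2 = gammaV s u ^-2.
  by rewrite -[LHS](mulKf (expf_neq0 2 g_neq0)) gammaV_sqr // mulr1.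
by field; exact: s_neq0.
Qed.

Lemma gammaV_opp u : gammaV s (- u) = gammaV s u.
Proof. by rewrite /gammaV /normv dotvNl dotvNr opprK. Qed.

(* The Minkowski product of the hyperboloid lifts (gamma_u, gamma_u u / s). *)
Definition minkowski_dot u v :=
  gammaV s u * gammaV s v * (1 - dotv u v / s ^+ 2).

Lemma minkowski_dotC u v : minkowski_dot u v = minkowski_dot v u.
Proof. by rewrite /minkowski_dot dotvC (mulrC (gammaV s u)). Qed.

Lemma minkowski_dotii u : dotv u u < s ^+ 2 -> minkowski_dot u u = 1.
Proof. by move=> us; rewrite /minkowski_dot -expr2 gammaV_sqr. Qed.

Lemma minkowski_dot_gt0 u v :
  dotv u u < s ^+ 2 -> dotv v v < s ^+ 2 -> 0 < minkowski_dot u v.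
Proof.
move=> us vs; rewrite /minkowski_dot !mulr_gt0 ?gammaV_gt0 //.
by rewrite one_sub_gt0 // dotv_lt_sqr.
Qed.

Lemma one_sub_gyrodist_sqr u v : dotv u u < s ^+ 2 -> dotv v v < s ^+ 2 ->
  1 - gyrodist s u v ^+ 2 / s ^+ 2 = (minkowski_dot u v ^+ 2)^-1.
Proof.
move=> us vs; rewrite /gyrodist normv_sqr /eadd /eopp gammaV_opp /minkowski_dot.
rewrite !(dotvDl, dotvDr, dotvZl, dotvZr, dotvNl, dotvNr) (dotvC v u).
rewrite [dotv u u]dotv_gammaV // [dotv v v]dotv_gammaV //.
have uv_lt := dotv_lt_sqr us vs.
have gu_gt0 := gammaV_gt0 us; have gv_gt0 := gammaV_gt0 vs.
set g := gammaV s u in gu_gt0 *; set h := gammaV s v in gv_gt0 *.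
set x := dotv u v in uv_lt *.
field.
by rewrite s_neq0 subr_eq0 gt_eqF // !lt0r_neq0 ?addr_gt0.
Qed.

Lemma gammaR_gyrodist u v : dotv u u < s ^+ 2 -> dotv v v < s ^+ 2 ->
  gammaR s (gyrodist s u v) = minkowski_dot u v.
Proof.
move=> us vs; have uv_gt0 := minkowski_dot_gt0 us vs.
rewrite /gammaR one_sub_gyrodist_sqr // -exprVn sqrtr_sqr ger0_norm ?invrK //.
by rewrite invr_ge0 ltW.
Qed.

Lemma sqr_gamma_gyrodist u v : dotv u u < s ^+ 2 -> dotv v v < s ^+ 2 ->
  (gammaR s (gyrodist s u v) * gyrodist s u v) ^+ 2
  = s ^+ 2 * (minkowski_dot u v ^+ 2 - 1).
Proof.
move=> us vs; have uv_neq0 := lt0r_neq0 (minkowski_dot_gt0 us vs).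
have d2E : gyrodist s u v ^+ 2 = s ^+ 2 * (1 - (minkowski_dot u v ^+ 2)^-1).
  by rewrite -one_sub_gyrodist_sqr //; field.
by rewrite exprMn d2E gammaR_gyrodist //; field.
Qed.

Lemma gamma_gyrodist_ge0 u v : dotv u u < s ^+ 2 -> dotv v v < s ^+ 2 ->
  0 <= gammaR s (gyrodist s u v) * gyrodist s u v.
Proof.
move=> us vs; rewrite gammaR_gyrodist // mulr_ge0 ?normv_ge0 //.
exact/ltW/minkowski_dot_gt0.
Qed.

Lemma segment_in_ball A B t : dotv A A < s ^+ 2 -> dotv B B < s ^+ 2 ->
  0 <= t <= 1 ->
  dotv ((1 - t) *: A + t *: B) ((1 - t) *: A + t *: B) < s ^+ 2.
Proof.
move=> As Bs /andP[t_ge0 t_le1].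
have ABs := dotv_lt_sqr As Bs.
rewrite !(dotvDl, dotvDr, dotvZl, dotvZr) (dotvC B A).
set a := dotv A A in As ABs *; set b := dotv B B in Bs ABs *.
set d := dotv A B in ABs *.
have cross : 0 <= t * (1 - t) * (s ^+ 2 - d) by rewrite !mulr_ge0 //; lra.
(* the weights (1 - t)^2 and t^2 cannot both vanish *)
have ends : 0 < (1 - t) * (1 - t) * (s ^+ 2 - a) + t * t * (s ^+ 2 - b).
  have endA : 0 <= (1 - t) * (1 - t) * (s ^+ 2 - a).
    by rewrite !mulr_ge0 //; lra.
  have endB : 0 <= t * t * (s ^+ 2 - b) by rewrite !mulr_ge0 //; lra.
  have [t_small|t_big] := lerP t (1 / 2).
    have : 0 < (1 - t) * (1 - t) * (s ^+ 2 - a) by rewrite !mulr_gt0 //; lra.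
    lra.
  have : 0 < t * t * (s ^+ 2 - b) by rewrite !mulr_gt0 //; lra.
  lra.
lra.
Qed.

(* gamma_P (1, P / s) = ((1 - t) gamma_P / gamma_A) gamma_A (1, A / s)
                        + (t gamma_P / gamma_B) gamma_B (1, B / s). *)
Lemma minkowski_dot_segment Z A B t : dotv A A < s ^+ 2 -> dotv B B < s ^+ 2 ->
  let P := (1 - t) *: A + t *: B in
  minkowski_dot Z P = (1 - t) * gammaV s P / gammaV s A * minkowski_dot Z A
                      + t * gammaV s P / gammaV s B * minkowski_dot Z B.
Proof.
move=> As Bs P; have A_neq0 := lt0r_neq0 (gammaV_gt0 As).
have B_neq0 := lt0r_neq0 (gammaV_gt0 Bs).
rewrite /minkowski_dot {1}/P !(dotvDr, dotvZr).
by field; rewrite A_neq0 B_neq0 s_neq0.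
Qed.

Lemma chord_product O A1 A2 P r :
  dotv O O < s ^+ 2 -> dotv A1 A1 < s ^+ 2 -> dotv A2 A2 < s ^+ 2 ->
  gyrodist s O A1 = r -> gyrodist s O A2 = r -> on_segment A1 A2 P ->
  gammaR s (gyrodist s P A1) * gyrodist s P A1
    * (gammaR s (gyrodist s P A2) * gyrodist s P A2)
    / (gammaR s (gyrodist s A1 A2) + 1)
  = s ^+ 2 * (1 - (minkowski_dot O P / gammaR s r) ^+ 2) / 2.
Proof.
move=> Os A1s A2s OA1 OA2 [t [t01 PE]]; subst P.
have Ps := segment_in_ball A1s A2s t01.
set P := (1 - t) *: A1 + t *: A2 in Ps *.
have /andP[t_ge0 t_le1] := t01.
set l := (1 - t) * gammaV s P / gammaV s A1.
set m := t * gammaV s P / gammaV s A2.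
have liftP Z :
    minkowski_dot Z P = l * minkowski_dot Z A1 + m * minkowski_dot Z A2.
  exact: minkowski_dot_segment.
have gr_eq1 : gammaR s r = minkowski_dot O A1 by rewrite -OA1 gammaR_gyrodist.
have gr_eq2 : gammaR s r = minkowski_dot O A2 by rewrite -OA2 gammaR_gyrodist.
have gr_gt0 : 0 < gammaR s r by rewrite gr_eq1 minkowski_dot_gt0.
have -> : minkowski_dot O P / gammaR s r = l + m.
  by rewrite liftP -gr_eq1 -gr_eq2; field; exact: lt0r_neq0.
have PA1 : minkowski_dot P A1 = l + m * minkowski_dot A1 A2.
  by rewrite minkowski_dotC liftP minkowski_dotii ?mulr1.
have PA2 : minkowski_dot P A2 = l * minkowski_dot A1 A2 + m.
  by rewrite minkowski_dotC liftP minkowski_dotii // (minkowski_dotC A2) mulr1.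
have gA1 := gammaV_gt0 A1s; have gA2 := gammaV_gt0 A2s.
have gP := gammaV_gt0 Ps.
have A12_sqr := sqr_gamma_gyrodist A1s A2s.
rewrite [gammaR s (gyrodist s A1 A2)]gammaR_gyrodist //.
apply: chord_product_alg.
- by rewrite /l divr_ge0 ?mulr_ge0 //; lra.
- by rewrite /m divr_ge0 ?mulr_ge0 //; lra.
- exact: minkowski_dot_gt0.
- have : 0 <= s ^+ 2 * (minkowski_dot A1 A2 ^+ 2 - 1).
    by rewrite -A12_sqr sqr_ge0.
  by rewrite (pmulr_rge0 _ s2_gt0) subr_ge0.
- by have := minkowski_dotii Ps; rewrite {1}liftP PA1 PA2; lra.
- exact: gamma_gyrodist_ge0.
- exact: gamma_gyrodist_ge0.
- by rewrite sqr_gamma_gyrodist // PA1.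
- by rewrite sqr_gamma_gyrodist // PA2.
Qed.

End Gamma.

Theorem mainTheorem6 (R : realType) (n : nat) (s : R)
  (C1 C2 C3 O : 'rV[R]_n) (r : R) (A1 A2 B1 B2 P : 'rV[R]_n) :
  (2 <= n)%N -> 0 < s ->
  is_gyroplane_data s C1 C2 C3 -> in_gyroplane s C1 C2 C3 O -> 0 < r ->
  on_gyrocircle s C1 C2 C3 O r A1 -> on_gyrocircle s C1 C2 C3 O r A2 ->
  on_gyrocircle s C1 C2 C3 O r B1 -> on_gyrocircle s C1 C2 C3 O r B2 ->
  A1 != A2 -> B1 != B2 ->
  on_segment A1 A2 P -> on_segment B1 B2 P ->
  gammaR s (gyrodist s P A1) * gyrodist s P A1
    * (gammaR s (gyrodist s P A2) * gyrodist s P A2)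
    / (gammaR s (gyrodist s A1 A2) + 1)
  = gammaR s (gyrodist s P B1) * gyrodist s P B1
    * (gammaR s (gyrodist s P B2) * gyrodist s P B2)
    / (gammaR s (gyrodist s B1 B2) + 1).
Proof.
move=> _ s_gt0 _ [O_ball _] _ [[A1_ball _] OA1] [[A2_ball _] OA2]
  [[B1_ball _] OB1] [[B2_ball _] OB2] _ _ PA PB.
have O_dot := in_ball_dotv O_ball.
rewrite (chord_product s_gt0 O_dot (in_ball_dotv A1_ball) (in_ball_dotv A2_ball)
  OA1 OA2 PA).
by rewrite (chord_product s_gt0 O_dot (in_ball_dotv B1_ball)
  (in_ball_dotv B2_ball) OB1 OB2 PB).
Qed.
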